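(* (Model B) Let $u\in\mathbb{R}^d$. For all sufficiently small $\beta>0$, every finite $\Lambda\subset\mathbb{Z}^d$ and every $\omega$ for which the bounds $As^2-B^\omega_{(x,y)}\le V^\omega_{(x,y)}(s)\le C_2s^2$ hold, $$F_{\beta,u,\Lambda}[\omega_\Lambda]\le-|\Lambda|\big(\sigma^{A-\beta}_\Lambda-\sigma^{C_2}_\Lambda\big)+\sum_{x,y\in\Lambda\cup\partial\Lambda,|x-y|=1}B^\omega_{(x,y)}-\frac{A-\beta-C_2}{2}\sum_{x,y\in\Lambda\cup\partial\Lambda,|x-y|=1}((x-y)\cdot u)^2.$$
   Context: Model B: for each nearest-neighbour bond $(x,y)$ of $\mathbb{Z}^d$ there is a random function $V^\omega_{(x,y)}:\mathbb{R}\to\mathbb{R}$, jointly measurable in $(\omega,s)$, i.i.d. over bonds, and for each $\omega$, $V^\omega_{(x,y)}\in C^2(\mathbb{R})$ is even. $(B^\omega_{(x,y)})$ are i.i.d. real random variables with $\mathbb{E}|B_{(x,y)}|<\infty$, and for $\mathbb P$-a.e. $\omega$, $As^2-B^\omega_{(x,y)}\le V^\omega_{(x,y)}(s)\le C_2s^2$ for all $s$ and all bonds (fixed $A,C_2>0$). For finite $\Lambda$, $\partial\Lambda=\{x\notin\Lambda:\|x-y\|_1=1\text{ for some }y\in\Lambda\}$; sums over ''$x,y$ with $|x-y|=1$'' are over ordered nearest-neighbour pairs. For $\psi\in\mathbb{R}^{\mathbb{Z}^d}$, $H^\psi_\Lambda[\omega](\phi)=\frac12\sum_{x,y\in\Lambda,|x-y|=1}V^\omega_{(x,y)}(\phi(x)-\phi(y))+\sum_{x\in\Lambda,y\in\partial\Lambda,|x-y|=1}V^\omega_{(x,y)}(\phi(x)-\psi(y))$,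 and $\nu^\psi_\Lambda[\omega](\mathrm{d}\phi)=\frac1Ze^{-H^\psi_\Lambda[\omega](\phi)}\prod_{x\in\Lambda}\mathrm{d}\phi(x)\prod_{x\notin\Lambda}\delta_{\psi(x)}(\mathrm{d}\phi(x))$. With $\psi_u(x)=x\cdot u$, $$F_{\beta,u,\Lambda}[\omega_\Lambda]=\log\int\nu^{\psi_u}_\Lambda[\omega](\mathrm{d}\phi)\exp\Big(\frac\beta2\sum_{x,y\in\mathbb{Z}^d,|x-y|=1}(\phi(x)-\phi(y)-u\cdot(x-y))^2\Big).$$ For $c>0$, $\sigma^c_\Lambda=-\frac1{|\Lambda|}\log\int_{\mathbb{R}^\Lambda}\exp\big(-\frac c2\sum_{x,y\in\Lambda,|x-y|=1}(\phi(x)-\phi(y))^2-c\sum_{x\in\Lambda,y\in\partial\Lambda,|x-y|=1}\phi(x)^2\big)\prod_{x\in\Lambda}\mathrm{d}\phi(x)$ (the surface tension of the nonrandom model with potential $V(s)=cs^2$, tilt $0$). *)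

From HB Require Import structures.
From mathcomp Require Import all_boot all_order all_algebra finmap.
From mathcomp Require Import all_classical all_reals all_analysis.

Set Implicit Arguments.
Unset Strict Implicit.
Unset Printing Implicit Defensive.

Import Order.TTheory GRing.Theory Num.Theory.
Import numFieldNormedType.Exports.
Local Open Scope ring_scope.

(* Sites of Z^d are integer row vectors; x 0 i is the i-th coordinate. *)
Definition site (d : nat) := 'rV[int]_d.

Definition nn (d : nat) (x y : site d) : bool :=
  (\sum_(i < d) `|x ord0 i - y ord0 i|%N)%N == 1%N.

Definition dotZ (R : realType) (d : nat) (x : site d) (u : 'rV[R]_d) : R :=
  \sum_(i < d) (x 0 i)%:~R * u 0 i.

Definition nbrs (d : nat) (x : site d) : seq (site d) :=
  [seq x + delta_mx 0 i | i <- enum 'I_d] ++ [seq x - delta_mx 0 i | i <- enum 'I_d].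

(* outer boundary  dL = { y notin L : ||y - x||_1 = 1 for some x in L } *)
Definition bdry (d : nat) (L : {fset site d}) : {fset site d} :=
  [fset y in flatten [seq nbrs x | x <- L] | (y \notin L) && has (nn y) L]%fset.

Definition clos (d : nat) (L : {fset site d}) : {fset site d} := (L `|` bdry L)%fset.

Definition upd (R : realType) (d : nat) (phi : site d -> R) (x : site d) (t : R) :
  site d -> R := fun y => if y == x then t else phi y.

(* For nonnegative integrands
   this is (Tonelli) the integral against prod_{x in s} dphi(x). *)
Fixpoint iint (R : realType) (d : nat) (s : seq (site d))
  (f : (site d -> R) -> \bar R) (phi : site d -> R) : \bar R :=
  match s with
  | [::] => f phi
  | x :: s' => (\int[@lebesgue_measure R]_t iint s' f (upd phi x t))%E
  end.

(* int prod_{x in L} dphi(x) prod_{x notin L} delta_{psi(x)}(dphi(x))  f(phi) *)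
Definition intL (R : realType) (d : nat) (L : {fset site d}) (psi : site d -> R)
  (f : (site d -> R) -> \bar R) : \bar R := iint (enum_fset L) f psi.

(* Hamiltonian H^psi_L[omega](phi); V x y is the potential of the bond {x,y} *)
Definition Ham (R : realType) (d : nat) (V : site d -> site d -> R -> R)
  (L : {fset site d}) (psi phi : site d -> R) : R :=
  2^-1 * (\sum_(x <- L) \sum_(y <- L | nn x y) V x y (phi x - phi y))
  + \sum_(x <- L) \sum_(y <- bdry L | nn x y) V x y (phi x - psi y).

Definition Zpart (R : realType) (d : nat) (V : site d -> site d -> R -> R)
  (L : {fset site d}) (psi : site d -> R) : \bar R :=
  intL L psi (fun phi => (expR (- Ham V L psi phi))%:E).

Definition gibbs (R : realType) (d : nat) (V : site d -> site d -> R -> R)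
  (L : {fset site d}) (psi : site d -> R) (g : (site d -> R) -> R) : \bar R :=
  intL L psi (fun phi => ((expR (- Ham V L psi phi) / fine (Zpart V L psi)) * g phi)%:E).

Definition psiu (R : realType) (d : nat) (u : 'rV[R]_d) : site d -> R :=
  fun x => dotZ x u.

Definition Ffree (R : realType) (d : nat) (beta : R) (u : 'rV[R]_d)
  (L : {fset site d}) (V : site d -> site d -> R -> R) : \bar R :=
  lne (gibbs V L (psiu u) (fun phi =>
    expR (beta / 2 * \sum_(x <- clos L) \sum_(y <- clos L | nn x y)
            (phi x - phi y - dotZ (x - y) u) ^+ 2))).

(* sigma^c_L, surface tension of V(s) = c s^2 at tilt 0 *)
Definition sigmaL (R : realType) (d : nat) (c : R) (L : {fset site d}) : R :=
  - (#|` L|%:R)^-1 * ln (fine (intL L (fun _ => 0) (fun phi =>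
      (expR (- (c / 2 * \sum_(x <- L) \sum_(y <- L | nn x y) (phi x - phi y) ^+ 2)
             - c * \sum_(x <- L) \sum_(y <- bdry L | nn x y) phi x ^+ 2))%:E))).

Definition isC2 (R : realType) (f : R -> R) : Prop :=
  (forall s, derivable f s 1) /\ (forall s, derivable (derive1 f) s 1) /\
  continuous (derive1n 2 f : R -> R).

Definition is_even (R : realType) (f : R -> R) : Prop := forall s, f (- s) = f s.

(* Write phi = psi_u + f.  For the quadratic potential the Hamiltonian splits into the
   Dirichlet form D(f) with zero boundary condition plus the energy T of the tilt psi_u:
   the cross term vanishes because the bond vectors x - y around each site cancel.  The
   bounds A s^2 - B <= V <= C2 s^2 therefore sandwich the Gibbs weight between Gaussian
   weights: Z >= e^(-C2 T) G(C2), and, since the tilt factor is exactly e^(beta D(f)),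
   the tilted numerator is at most e^(B - A T) G(A - beta), where G(c) is the Gaussian
   integral of exp(-c D).  Taking logarithms, log G(c) = -|L| sigma^c_L, and the remaining
   constants are dominated by the bond sums over L u dL (using A <= C2 on the
   boundary-boundary bonds).  Any beta in (0, A) works. *)

From HB Require Import structures.
From mathcomp Require Import all_boot all_order all_algebra finmap.
From mathcomp Require Import all_classical all_reals all_analysis.
From mathcomp Require Import measurable_realfun ring lra.
Import Order.TTheory GRing.Theory Num.Theory.
Import numFieldNormedType.Exports.
Import HBNNSimple.
Local Open Scope classical_set_scope.
Local Open Scope ring_scope.

Section AffineChange.
Context {R : realType}.
Local Notation mu := (@lebesgue_measure R).
Variables (lam a : R).
Hypothesis lam_gt0 : 0 < lam.

Definition affine (t : R) : R := lam * t + a.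

Lemma measurable_affine : measurable_fun setT affine.
Proof.
apply: continuous_measurable_fun => x; apply: continuousD; last exact: cvg_cst.
by apply: continuousM; [exact: cvg_cst | exact: cvg_id].
Qed.

Lemma affine_preimage_itv (x1 x2 : R) :
  affine @^-1` `]x1, x2]%classic = `](x1 - a) / lam, (x2 - a) / lam]%classic.
Proof.
apply/seteqP; split => t /=; rewrite /affine !in_itv /=;
  by rewrite ltr_pdivrMr // ler_pdivlMr // ltrBlDr lerBrDr [t * _]mulrC.
Qed.

(* Uniqueness of the Lebesgue measure: S |-> lam * mu (affine^-1 S) agrees with mu on intervals. *)
Lemma lebesgue_measure_affine (S : set R) :
  measurable S -> mu S = (lam%:E * mu (affine @^-1` S))%E.
Proof.
move=> mS.
pose maff : @measurable_fun _ _ (measurableTypeR R) (measurableTypeR R) setT affine :=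
  measurable_affine.
pose push : {measure set (measurableTypeR R) -> \bar R} :=
  measure_function_pushforward__canonical__measure_function_Measure mu maff.
have := @lebesgue_measure_unique R (mscale (NngNum (ltW lam_gt0)) push) _ S mS; apply.
move=> _ [[x1 x2] _ <-] /=.
have -> : mscale (NngNum (ltW lam_gt0)) push `]x1, x2]%classic =
    (lam%:E * mu (affine @^-1` `]x1, x2]%classic))%E by [].
rewrite affine_preimage_itv !lebesgue_measure_itv /=.
rewrite !lte_fin ltr_pM2r ?invr_gt0 // ltrD2r.
case: ifPn => _; last by rewrite mule0.
by rewrite -EFinB -EFinM; congr (_%:E); field; rewrite gt_eqF.
Qed.

Section CompAffine.
Variable h : {nnsfun (measurableTypeR R) >-> R}.

Definition comp_affine : measurableTypeR R -> R := h \o affine.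

Lemma measurable_comp_affine : @measurable_fun _ _ (measurableTypeR R) R setT comp_affine.
Proof. exact: measurableT_comp (measurable_funPT h) measurable_affine. Qed.
HB.instance Definition _ :=
  isMeasurableFun.Build _ _ _ _ comp_affine measurable_comp_affine.

Lemma finite_range_comp_affine : finite_set (range comp_affine).
Proof. by apply: sub_finite_set (fimfunP h) => _ [t _ <-]; exists (affine t). Qed.
HB.instance Definition _ := FiniteImage.Build _ _ comp_affine finite_range_comp_affine.

Lemma comp_affine_ge0 t : 0 <= comp_affine t. Proof. exact: fun_ge0. Qed.
HB.instance Definition _ := isNonNegFun.Build _ _ comp_affine comp_affine_ge0.

Definition comp_affine_nnsfun : {nnsfun (measurableTypeR R) >-> R} := comp_affine.

Lemma sintegral_comp_affine :
  sintegral mu comp_affine_nnsfun = (lam^-1%:E * sintegral mu h)%E.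
Proof.
have mul_ge0 x : (0 <= x%:E * mu (h @^-1` [set x]))%E by exact: nnsfun_mulemu_ge0.
rewrite /sintegral (ge0_mule_fsumr _ _ mul_ge0); apply: eq_fsbigr => x _.
have mhx : measurable (h @^-1` [set x]) by exact: measurable_sfunP.
rewrite (lebesgue_measure_affine _ mhx).
by rewrite (muleCA x%:E) muleA -EFinM mulVf ?gt_eqF // mul1e.
Qed.
End CompAffine.
End AffineChange.

(* The integrands below involve the random potentials, whose measurability is not
   assumed; so monotonicity, scaling and change of variables are derived from the
   definition of the nonnegative integral as a supremum over simple functions. *)
Section NonnegIntegral.
Local Open Scope ereal_scope.
Context d (T : measurableType d) (R : realType).
Variable mu : {measure set T -> \bar R}.
Implicit Types f g : T -> \bar R.

Lemma ge0_integral_le_scaled f g (c : R) :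
  (forall x, 0 <= f x) -> (forall x, 0 <= g x) -> (0 <= c)%R ->
  (forall h : {nnsfun T >-> R}, (forall x, (h x)%:E <= f x) ->
     exists2 h' : {nnsfun T >-> R},
       (forall x, (h' x)%:E <= g x) & sintegral mu h = c%:E * sintegral mu h') ->
  \int[mu]_x f x <= c%:E * \int[mu]_x g x.
Proof.
move=> f0 g0 c0 fg; rewrite !ge0_integralTE //.
apply: ge_ereal_sup => _ [h hf <-]; have [h' h'g ->] := fg h hf.
by apply: lee_wpmul2l; [rewrite lee_fin | apply: ereal_sup_ubound; exists h'].
Qed.

Lemma ge0_le_integral_nomeas f g : (forall x, 0 <= f x) ->
  (forall x, f x <= g x) -> \int[mu]_x f x <= \int[mu]_x g x.
Proof.
move=> f0 fg; rewrite -[X in _ <= X]mul1e.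
apply: ge0_integral_le_scaled => // [x|h hf]; first exact: le_trans (fg x).
by exists h; [move=> x; exact: le_trans (fg x) | rewrite mul1e].
Qed.

Lemma ge0_integralZl_nomeas f (k : R) : (0 <= k)%R -> (forall x, 0 <= f x) ->
  \int[mu]_x (k%:E * f x) = k%:E * \int[mu]_x f x.
Proof.
move=> k0 f0; have [->|kn0] := eqVneq k 0%R.
  by rewrite mul0e; under eq_integral do rewrite mul0e; rewrite integral0.
have k_gt0 : (0 < k)%R by rewrite lt_neqAle eq_sym kn0.
have kf0 x : 0 <= k%:E * f x by rewrite mule_ge0 ?lee_fin.
have ki0 : (0 <= k^-1)%R by rewrite invr_ge0.
apply/eqP; rewrite eq_le; apply/andP; split.
  apply: ge0_integral_le_scaled => // h hf.
  exists (scale_nnsfun h ki0).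
    move=> x; rewrite /= EFinM; apply: le_trans (lee_wpmul2l _ (hf x)) _.
      by rewrite lee_fin.
    by rewrite muleA -EFinM mulVf ?gt_eqF // mul1e.
  by rewrite sintegralrM muleA -EFinM mulfV ?gt_eqF // mul1e.
have le_inv : \int[mu]_x f x <= k^-1%:E * \int[mu]_x (k%:E * f x).
  apply: ge0_integral_le_scaled => // h hf.
  exists (scale_nnsfun h k0).
    by move=> x; rewrite /= EFinM lee_wpmul2l ?lee_fin.
  by rewrite sintegralrM muleA -EFinM mulVf ?gt_eqF // mul1e.
apply: le_trans (lee_wpmul2l _ le_inv) _; first by rewrite lee_fin.
by rewrite muleA -EFinM mulfV ?gt_eqF // mul1e.
Qed.
End NonnegIntegral.

Lemma ge0_integral_affine {R : realType} (f : R -> \bar R) (lam a : R) :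
  (0 < lam)%R -> (forall x, (0 <= f x)%E) ->
  (\int[@lebesgue_measure R]_t f (lam * t + a)%R =
   lam^-1%:E * \int[@lebesgue_measure R]_t f t)%E.
Proof.
move=> lam_gt0 f0; have lamV_gt0 : (0 < lam^-1)%R by rewrite invr_gt0.
have cancel_scale (k : R) (z : \bar R) : (0 < k)%R -> (z = k^-1%:E * (k%:E * z))%E.
  by move=> k_gt0; rewrite muleA -EFinM mulVf ?gt_eqF // mul1e.
apply/eqP; rewrite eq_le; apply/andP; split.
  apply: ge0_integral_le_scaled => // [|h hf]; first exact: ltW.
  exists (comp_affine_nnsfun lam^-1 (- (a / lam)) h).
    move=> x; apply: le_trans (hf _) _; rewrite /affine le_eqVlt; apply/orP; left.
    by apply/eqP; congr f; field; rewrite gt_eqF.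
  by rewrite (sintegral_comp_affine _ _ lamV_gt0) invrK -cancel_scale.
rewrite [X in (_ <= X)%E](cancel_scale lam) //.
apply: lee_wpmul2l; first by rewrite lee_fin ltW.
apply: ge0_integral_le_scaled => // [|h hf]; first exact: ltW.
exists (comp_affine_nnsfun lam a h) => [x|]; first exact: hf.
by rewrite (sintegral_comp_affine _ _ lam_gt0) muleA -EFinM mulfV ?gt_eqF // mul1e.
Qed.

Section IteratedIntegral.
Context {R : realType} {d : nat}.
Local Open Scope ereal_scope.
Implicit Types (s : seq (site d)) (f g : (site d -> R) -> \bar R) (phi : site d -> R).

Lemma iint_ge0 s f phi : (forall p, 0 <= f p) -> 0 <= iint s f phi.
Proof.
move=> f0; elim: s phi => [|x s IH] phi /=; first exact: f0.
by apply: integral_ge0 => t _; exact: IH.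
Qed.

Lemma le_iint s f g phi0 : (forall p, 0 <= f p) ->
  (forall p, (forall y, y \notin s -> p y = phi0 y) -> f p <= g p) ->
  iint s f phi0 <= iint s g phi0.
Proof.
move=> f0; elim: s phi0 => [|x s IH] phi0 fg /=; first exact: fg.
apply: ge0_le_integral_nomeas => t; first exact: iint_ge0.
apply: IH => p p_off; apply: fg => y; rewrite in_cons negb_or => /andP[yx ys].
by rewrite p_off // /upd (negbTE yx).
Qed.

Lemma iintZl s f phi (k : R) : (0 <= k)%R -> (forall p, 0 <= f p) ->
  iint s (fun p => k%:E * f p) phi = k%:E * iint s f phi.
Proof.
move=> k0 f0; elim: s phi => [|x s IH] phi //=.
under eq_integral do rewrite IH.
by rewrite ge0_integralZl_nomeas // => t; exact: iint_ge0.
Qed.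

Lemma iint0 s phi : iint s (fun _ => 0) phi = 0.
Proof.
elim: s phi => [|x s IH] phi //=.
by under eq_integral do rewrite IH; rewrite integral0.
Qed.

Lemma iint_affine s f phi0 (lam : R) (th : site d -> R) : (0 < lam)%R ->
  (forall p, 0 <= f p) ->
  iint s (fun p => f (fun y => lam * p y + th y)%R) phi0 =
  ((lam^-1) ^+ size s)%:E * iint s f (fun y => lam * phi0 y + th y)%R.
Proof.
move=> lam_gt0 f0; elim: s phi0 => [|x s IH] phi0 /=; first by rewrite expr0 mul1e.
under eq_integral => t _.
  rewrite IH.
  have -> : (fun y => lam * upd phi0 x t y + th y)%R =
      upd (fun y => lam * phi0 y + th y)%R x (lam * t + th x)%R.
    by apply/funext => y; rewrite /upd; case: eqP => // ->.
  over.
rewrite ge0_integralZl_nomeas; last 2 first.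
- by rewrite exprn_ge0 // invr_ge0 ltW.
- by move=> t; exact: iint_ge0.
rewrite (ge0_integral_affine (fun v => iint s f (upd _ x v))) //;
  last by move=> t; exact: iint_ge0.
by rewrite muleA -EFinM exprSr.
Qed.
End IteratedIntegral.

Section Lattice.
Context {d : nat}.
Implicit Types (x y : site d) (L : {fset site d}).

Lemma nn_sym x y : nn x y = nn y x.
Proof. by rewrite /nn; congr (_ == _); apply: eq_bigr => i _; rewrite distnC. Qed.

Lemma nn_nbrs x y : nn x y -> y \in nbrs x.
Proof.
rewrite /nn => /eqP sum1.
have [i di_neq0|all0] := pickP (fun i : 'I_d => `|x ord0 i - y ord0 i|%N != 0%N); last first.
  by move: sum1; rewrite big1 // => i _; apply/eqP/negbNE; rewrite all0.
move: sum1; rewrite (bigD1 i) //= => sum1.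
have di1 : `|x ord0 i - y ord0 i|%N = 1%N.
  by move: di_neq0 sum1; case: (`|_|%N) => // [[|]].
have eq_off j : j != i -> x ord0 j = y ord0 j.
  move=> ji; apply/eqP; rewrite -subr_eq0 -absz_eq0.
  move: sum1; rewrite di1 add1n => /eqP; rewrite eqSS sum_nat_eq0.
  by move=> /forallP/(_ j); rewrite ji.
have [di|di] : x ord0 i - y ord0 i = 1 \/ x ord0 i - y ord0 i = -1.
  by move: di1; case: (x ord0 i - y ord0 i) => [[|[|]]|[|]] //= _; [left|right].
- rewrite mem_cat; apply/orP; right; apply/mapP; exists i; first by rewrite mem_enum.
  apply/rowP => j; rewrite !mxE eqxx /=.
  have [->|ji] := eqVneq j i; first by rewrite /= -di opprB addrC subrK.
  by rewrite /= subr0 (eq_off j ji).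
- rewrite mem_cat; apply/orP; left; apply/mapP; exists i; first by rewrite mem_enum.
  apply/rowP => j; rewrite !mxE eqxx /=.
  have [->|ji] := eqVneq j i; first by rewrite /=; move: di; lra.
  by rewrite /= addr0 (eq_off j ji).
Qed.

Lemma in_bdry L y :
  (y \in bdry L) = [&& y \in flatten [seq nbrs x | x <- L], y \notin L & has (nn y) L].
Proof. by rewrite /bdry !inE. Qed.

Lemma bdry_notin L y : y \in bdry L -> y \notin L.
Proof. by rewrite in_bdry => /and3P[]. Qed.

Lemma nn_clos L x y : x \in L -> nn x y -> y \in clos L.
Proof.
move=> xL nxy; rewrite /clos in_fsetU; case yL: (y \in L) => //=.
rewrite in_bdry yL /=; apply/andP; split.
  by apply/flatten_mapP; exists x => //; exact: nn_nbrs.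
by apply/hasP; exists x => //; rewrite nn_sym.
Qed.

Lemma perm_clos L : perm_eq (enum_fset (clos L)) (enum_fset L ++ enum_fset (bdry L)).
Proof.
apply: uniq_perm; first exact: fset_uniq.
  by rewrite cat_uniq !fset_uniq /= andbT; apply/hasPn => y /bdry_notin.
by move=> y; rewrite mem_cat /clos in_fsetU.
Qed.

Lemma big_clos {R : nmodType} L (P : pred (site d)) (F : site d -> R) :
  \sum_(y <- clos L | P y) F y = \sum_(y <- L | P y) F y + \sum_(y <- bdry L | P y) F y.
Proof. by rewrite (perm_big _ (perm_clos L)) big_cat. Qed.

Lemma nn_reflect x y : nn x (x + x - y) = nn x y.
Proof.
rewrite /nn; congr (_ == _); apply: eq_bigr => i _.
by rewrite !mxE -abszN; congr (`|_|%N); ring.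
Qed.

Lemma dotZB (R : realType) x y (u : 'rV[R]_d) : dotZ (x - y) u = dotZ x u - dotZ y u.
Proof. by rewrite /dotZ -sumrB; apply: eq_bigr => i _; rewrite !mxE intrB mulrBl. Qed.

Lemma dotZD (R : realType) x y (u : 'rV[R]_d) : dotZ (x + y) u = dotZ x u + dotZ y u.
Proof. by rewrite /dotZ -big_split; apply: eq_bigr => i _; rewrite !mxE intrD mulrDl. Qed.

(* The reflection y |-> 2x - y permutes the neighbours of x and negates x - y. *)
Lemma sum_nn_dotZ_clos (R : realType) (u : 'rV[R]_d) L x : x \in L ->
  \sum_(y <- clos L | nn x y) dotZ (x - y) u = 0.
Proof.
move=> xL; rewrite -big_filter; set r := [seq y <- enum_fset (clos L) | nn x y].
pose refl y := x + x - y.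
have reflK : involutive refl by move=> y; rewrite /refl opprB addrC subrK.
have refl_r y : y \in r -> refl y \in r.
  rewrite !mem_filter nn_reflect => /andP[nxy _].
  by rewrite nxy /=; apply: nn_clos xL _; rewrite nn_reflect.
have r_uniq : uniq r by rewrite filter_uniq // fset_uniq.
have perm_r : perm_eq r (map refl r).
  apply: uniq_perm => //; first by rewrite (map_inj_uniq (can_inj reflK)).
  move=> y; apply/idP/mapP => [yr|[z zr ->]]; last exact: refl_r.
  by exists (refl y); [exact: refl_r | rewrite reflK].
have sumN : \sum_(y <- r) dotZ (x - y) u = - \sum_(y <- r) dotZ (x - y) u.
  rewrite {1}(perm_big _ perm_r) big_map -sumrN; apply: eq_bigr => y _.
  by rewrite /refl !dotZB dotZD; ring.
by move: sumN; set S := \sum_(y <- r) _; lra.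
Qed.
End Lattice.

Section BondSums.
Context {R : realType} {d : nat}.
Implicit Types (M N L : {fset site d}) (F G : site d -> site d -> R).

Definition bond_sum M N F := \sum_(x <- M) \sum_(y <- N | nn x y) F x y.

Lemma bond_sumC M N F : bond_sum M N F = bond_sum N M (fun x y => F y x).
Proof.
rewrite /bond_sum; under eq_bigr do rewrite big_mkcond.
rewrite exchange_big; apply: eq_bigr => y _; rewrite [RHS]big_mkcond.
by apply: eq_bigr => x _ /=; rewrite nn_sym.
Qed.

Lemma bond_sum_clos L F : \sum_(x <- clos L) \sum_(y <- clos L | nn x y) F x y =
  bond_sum L L F + bond_sum L (bdry L) F + bond_sum (bdry L) L F +
  bond_sum (bdry L) (bdry L) F.
Proof.
rewrite (big_clos L xpredT) /bond_sum.
under eq_bigr do rewrite big_clos.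
under [X in _ + X]eq_bigr do rewrite big_clos.
by rewrite !big_split /= !addrA.
Qed.

Lemma bond_sumD M N F G :
  bond_sum M N (fun x y => F x y + G x y) = bond_sum M N F + bond_sum M N G.
Proof. by rewrite /bond_sum -big_split; apply: eq_bigr => x _; rewrite big_split. Qed.

Lemma bond_sumB M N F G :
  bond_sum M N (fun x y => F x y - G x y) = bond_sum M N F - bond_sum M N G.
Proof. by rewrite /bond_sum -sumrB; apply: eq_bigr => x _; rewrite sumrB. Qed.

Lemma bond_sumZ M N (c : R) F :
  bond_sum M N (fun x y => c * F x y) = c * bond_sum M N F.
Proof. by rewrite /bond_sum mulr_sumr; apply: eq_bigr => x _; rewrite mulr_sumr. Qed.

Lemma eq_bond_sum M N F G :
  (forall x y, x \in M -> y \in N -> nn x y -> F x y = G x y) ->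
  bond_sum M N F = bond_sum M N G.
Proof.
move=> FG; rewrite /bond_sum big_seq [RHS]big_seq; apply: eq_bigr => x xM.
rewrite big_seq_cond [RHS]big_seq_cond; apply: eq_bigr => y /andP[yN nxy].
exact: FG.
Qed.

Lemma ler_bond_sum M N F G :
  (forall x y, x \in M -> y \in N -> nn x y -> F x y <= G x y) ->
  bond_sum M N F <= bond_sum M N G.
Proof.
move=> FG; rewrite /bond_sum big_seq [X in _ <= X]big_seq; apply: ler_sum => x xM.
rewrite big_seq_cond [X in _ <= X]big_seq_cond; apply: ler_sum => y /andP[yN nxy].
exact: FG.
Qed.

Lemma bond_sum0 M N : bond_sum M N (fun _ _ => 0) = 0.
Proof. by rewrite /bond_sum big1 // => x _; rewrite big1. Qed.

Lemma bond_sum_ge0 M N F :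
  (forall x y, x \in M -> y \in N -> nn x y -> 0 <= F x y) -> 0 <= bond_sum M N F.
Proof. by move=> F0; rewrite -(bond_sum0 M N); exact: ler_bond_sum. Qed.
End BondSums.

Section Hamiltonian.
Context {R : realType} {d : nat}.
Implicit Types (L : {fset site d}) (V : site d -> site d -> R -> R)
  (b : site d -> site d -> R) (psi phi p : site d -> R).

Definition bond_weight L b := 2^-1 * bond_sum L L b + bond_sum L (bdry L) b.

Definition dirichlet L p := Ham (fun _ _ s => s ^+ 2) L (fun _ => 0) p.

Lemma HamE V L psi phi : Ham V L psi phi =
  2^-1 * bond_sum L L (fun x y => V x y (phi x - phi y)) +
  bond_sum L (bdry L) (fun x y => V x y (phi x - psi y)).
Proof. by []. Qed.

Lemma Ham_cst b L psi phi : Ham (fun x y _ => b x y) L psi phi = bond_weight L b.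
Proof. by []. Qed.

Lemma HamB V1 V2 L psi phi :
  Ham (fun x y s => V1 x y s - V2 x y s) L psi phi = Ham V1 L psi phi - Ham V2 L psi phi.
Proof. by rewrite !HamE !bond_sumB; ring. Qed.

Lemma HamZ (c : R) V L psi phi :
  Ham (fun x y s => c * V x y s) L psi phi = c * Ham V L psi phi.
Proof. by rewrite !HamE !bond_sumZ; ring. Qed.

Lemma ler_Ham V1 V2 L psi phi :
  (forall x y, nn x y -> forall s, V1 x y s <= V2 x y s) ->
  Ham V1 L psi phi <= Ham V2 L psi phi.
Proof.
move=> V12; rewrite !HamE; apply: lerD; last by apply: ler_bond_sum => x y _ _ /V12.
by apply: ler_wpM2l; [rewrite invr_ge0 | apply: ler_bond_sum => x y _ _ /V12].
Qed.

Lemma dirichletZ (lam : R) L p :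
  dirichlet L (fun y => lam * p y + 0) = lam ^+ 2 * dirichlet L p.
Proof.
rewrite /dirichlet -HamZ !HamE.
by congr (_ * _ + _); apply: eq_bond_sum => x y _ _ _; ring.
Qed.

Lemma bond_weight_le_clos L b : (forall x y, nn x y -> 0 <= b x y) ->
  bond_weight L b <= \sum_(x <- clos L) \sum_(y <- clos L | nn x y) b x y.
Proof.
move=> b0; have ge0 M N : 0 <= bond_sum M N b by apply: bond_sum_ge0 => x y _ _ /b0.
rewrite bond_sum_clos /bond_weight.
by move: (ge0 L L) (ge0 L (bdry L)) (ge0 (bdry L) L) (ge0 (bdry L) (bdry L)); lra.
Qed.

Section Tilt.
Variable u : 'rV[R]_d.
Local Notation tilt x y := (dotZ (x - y) u).

Lemma bond_sum_cross_tilt L p :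
  bond_sum L L (fun x y => (p x - p y) * tilt x y) +
  2 * bond_sum L (bdry L) (fun x y => p x * tilt x y) = 0.
Proof.
have interior : bond_sum L L (fun x y => (p x - p y) * tilt x y) =
    2 * bond_sum L L (fun x y => p x * tilt x y).
  under eq_bond_sum do rewrite mulrBl.
  rewrite bond_sumB [X in _ - X]bond_sumC.
  have -> : bond_sum L L (fun x y => p x * tilt y x) =
      - bond_sum L L (fun x y => p x * tilt x y).
    by rewrite -mulN1r -bond_sumZ; apply: eq_bond_sum => x y _ _ _; rewrite !dotZB; ring.
  by rewrite opprK mulr2n mulrDl mul1r.
rewrite interior -mulrDr.
rewrite /bond_sum -big_split big_seq big1 ?mulr0 // => x xL.
by rewrite /= -!mulr_sumr -mulrDr -big_clos sum_nn_dotZ_clos // mulr0.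
Qed.

Lemma Ham_sq_psiu L phi :
  Ham (fun _ _ s => s ^+ 2) L (psiu u) phi =
  dirichlet L (fun y => phi y - psiu u y) + bond_weight L (fun x y => tilt x y ^+ 2).
Proof.
set p := fun y => phi y - psiu u y.
have split_interior : bond_sum L L (fun x y => (phi x - phi y) ^+ 2) =
    bond_sum L L (fun x y => (p x - p y) ^+ 2) + bond_sum L L (fun x y => tilt x y ^+ 2) +
    bond_sum L L (fun x y => 2 * ((p x - p y) * tilt x y)).
  by rewrite -!bond_sumD; apply: eq_bond_sum => x y _ _ _; rewrite /p /psiu dotZB; ring.
have split_boundary : bond_sum L (bdry L) (fun x y => (phi x - psiu u y) ^+ 2) =
    bond_sum L (bdry L) (fun x y => (p x - 0) ^+ 2) +
    bond_sum L (bdry L) (fun x y => tilt x y ^+ 2) +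
    bond_sum L (bdry L) (fun x y => 2 * (p x * tilt x y)).
  by rewrite -!bond_sumD; apply: eq_bond_sum => x y _ _ _; rewrite /p /psiu dotZB; ring.
rewrite /dirichlet /bond_weight !HamE split_interior split_boundary !bond_sumZ.
by move: (bond_sum_cross_tilt L p); lra.
Qed.

(* The fluctuation [phi - psiu u] vanishes on the boundary, so bonds between boundary
   sites contribute nothing. *)
Lemma sum_clos_tilted_sq L phi : (forall y, y \notin L -> phi y = psiu u y) ->
  \sum_(x <- clos L) \sum_(y <- clos L | nn x y) (phi x - phi y - tilt x y) ^+ 2 =
  2 * dirichlet L (fun y => phi y - psiu u y).
Proof.
move=> phi_off; set p := fun y => phi y - psiu u y.
have p_bdry y : y \in bdry L -> p y = 0.
  by move=> /bdry_notin /phi_off; rewrite /p => ->; rewrite subrr.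
have tilted x y : phi x - phi y - tilt x y = p x - p y.
  by rewrite /p /psiu dotZB; ring.
rewrite bond_sum_clos /dirichlet HamE [bond_sum (bdry L) L _]bond_sumC.
have -> : bond_sum (bdry L) (bdry L) (fun x y => (phi x - phi y - tilt x y) ^+ 2) = 0.
  rewrite -(bond_sum0 (bdry L) (bdry L)); apply: eq_bond_sum => x y xb yb _.
  by rewrite tilted !p_bdry // subrr expr0n.
have -> : bond_sum L (bdry L) (fun x y => (phi y - phi x - tilt y x) ^+ 2) =
    bond_sum L (bdry L) (fun x y => (phi x - phi y - tilt x y) ^+ 2).
  by apply: eq_bond_sum => x y _ _ _; rewrite -sqrrN !dotZB; congr (_ ^+ 2); ring.
have -> : bond_sum L (bdry L) (fun x y => (phi x - phi y - tilt x y) ^+ 2) =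
    bond_sum L (bdry L) (fun x y => (p x - 0) ^+ 2).
  by apply: eq_bond_sum => x y _ yb _; rewrite tilted (p_bdry y).
under eq_bond_sum do rewrite tilted.
by field.
Qed.
(* The bonds inside the boundary carry the weight [c - a], which is nonnegative as soon as
   there is a bond at all. *)
Lemma bond_weight_tilt_le L {a c beta : R} : 0 <= beta ->
  (forall x y : site d, nn x y -> a <= c) ->
  (c - a) * bond_weight L (fun x y => tilt x y ^+ 2) <=
  - ((a - beta - c) / 2) * \sum_(x <- clos L) \sum_(y <- clos L | nn x y) tilt x y ^+ 2.
Proof.
move=> beta0 ac; rewrite bond_sum_clos /bond_weight.
have -> : bond_sum (bdry L) L (fun x y => tilt x y ^+ 2) =
    bond_sum L (bdry L) (fun x y => tilt x y ^+ 2).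
  by rewrite bond_sumC; apply: eq_bond_sum => x y _ _ _; rewrite -sqrrN !dotZB opprB.
have sq0 M N : 0 <= bond_sum M N (fun x y => tilt x y ^+ 2).
  by apply: bond_sum_ge0 => x y _ _ _; exact: sqr_ge0.
have bdry0 : 0 <= (c - a) * bond_sum (bdry L) (bdry L) (fun x y => tilt x y ^+ 2).
  rewrite -bond_sumZ; apply: bond_sum_ge0 => x y _ _ nxy.
  by rewrite mulr_ge0 ?sqr_ge0 // subr_ge0 (ac x y).
have := sq0 L L; have := sq0 L (bdry L); have := sq0 (bdry L) (bdry L).
by move: bdry0; nra.
Qed.
End Tilt.
End Hamiltonian.

Lemma fine_gt0_EFin {R : realType} (x : \bar R) : 0 < fine x -> x = (fine x)%:E.
Proof. by case: x => [r| |] //=; rewrite ltxx. Qed.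

Section GaussianReference.
Context {R : realType} {d : nat}.
Implicit Types (L : {fset site d}) (c : R).

Definition gauss c L : \bar R :=
  intL L (fun _ => 0) (fun p => (expR (- (c * dirichlet L p)))%:E).

Lemma gauss_scale c L : 0 < c ->
  gauss c L = ((((Num.sqrt c)^-1) ^+ #|` L|)%:E * gauss 1 L)%E.
Proof.
move=> c_gt0; have sc_gt0 : 0 < Num.sqrt c by rewrite sqrtr_gt0.
pose f (p : site d -> R) := (expR (- (1 * dirichlet L p)))%:E.
rewrite /gauss /intL.
transitivity (iint (enum_fset L) (fun p => f (fun y => Num.sqrt c * p y + 0)) (fun=> 0)).
  congr iint; apply/funext => p.
  by rewrite /f dirichletZ sqr_sqrtr ?ltW // mul1r.
rewrite iint_affine // => [|p]; last by rewrite lee_fin expR_ge0.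
by congr (_ * iint _ _ _)%E; apply/funext => y; rewrite mulr0 addr0.
Qed.

Lemma gauss_shift c L (psi : site d -> R) :
  iint (enum_fset L) (fun phi => (expR (- (c * dirichlet L (fun y => phi y - psi y))))%:E) psi =
  gauss c L.
Proof.
pose f (p : site d -> R) := (expR (- (c * dirichlet L p)))%:E.
rewrite /gauss /intL.
transitivity (iint (enum_fset L) (fun p => f (fun y => 1 * p y + - psi y)) psi).
  by congr iint; apply/funext => p; under [in RHS]eq_fun do rewrite mul1r.
rewrite iint_affine // => [|p]; last by rewrite lee_fin expR_ge0.
rewrite invr1 expr1n mul1e; congr iint.
by apply/funext => y; rewrite mul1r subrr.
Qed.

Lemma mulr_sigmaL c L : #|` L|%:R * sigmaL c L = - ln (fine (gauss c L)).
Proof.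
rewrite /sigmaL /gauss mulrA mulrN.
have -> : intL L (fun _ => 0) (fun phi =>
    (expR (- (c / 2 * \sum_(x <- L) \sum_(y <- L | nn x y) (phi x - phi y) ^+ 2)
           - c * \sum_(x <- L) \sum_(y <- bdry L | nn x y) phi x ^+ 2))%:E) =
    intL L (fun _ => 0) (fun p => (expR (- (c * dirichlet L p)))%:E).
  congr intL; apply/funext => p; rewrite /dirichlet HamE /bond_sum.
  congr (expR _)%:E.
  have -> : \sum_(x <- L) \sum_(y <- bdry L | nn x y) (p x - 0) ^+ 2 =
      \sum_(x <- L) \sum_(y <- bdry L | nn x y) p x ^+ 2.
    by apply: eq_bigr => x _; apply: eq_bigr => y _; rewrite subr0.
  ring.
(* For empty [L], [sigmaL] is [0^-1 * _ = 0]; so is the right-hand side. *)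
have [L0|Ln0] := eqVneq #|` L| 0%N; last by rewrite mulfV ?pnatr_eq0 // mulN1r.
have dirichlet0 : dirichlet L (fun=> 0 : R) = 0.
  rewrite /dirichlet HamE.
  under eq_bond_sum do rewrite subrr expr0n.
  under [X in _ + X]eq_bond_sum do rewrite subrr expr0n.
  by rewrite !bond_sum0 mulr0 addr0.
rewrite /intL (size0nil L0) /= dirichlet0 mulr0 oppr0 expR0 ln1 oppr0.
by rewrite mul0r oppr0 mul0r.
Qed.

Lemma gauss_ge0 c L : (0 <= gauss c L)%E.
Proof. by apply: iint_ge0 => p; rewrite lee_fin expR_ge0. Qed.

Lemma gauss_fin_gt0 {L} {c1 c2 k1 k2 : R} {Z : \bar R} : 0 < c1 -> 0 < c2 ->
  0 < k1 -> (k1%:E * gauss c1 L <= Z)%E -> (Z <= k2%:E * gauss c2 L)%E -> 0 < fine Z ->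
  forall c, 0 < c -> exists2 g, 0 < g & gauss c L = g%:E.
Proof.
move=> c1_gt0 c2_gt0 k1_gt0 Zge Zle Z_gt0 c c_gt0.
have r_gt0 c' : 0 < c' -> 0 < (Num.sqrt c')^-1 ^+ #|` L|.
  by move=> c'_gt0; rewrite exprn_gt0 // invr_gt0 sqrtr_gt0.
have := gauss_ge0 1 L; move: Zge Zle.
rewrite (gauss_scale _ _ c1_gt0) (gauss_scale _ _ c2_gt0) (gauss_scale _ _ c_gt0).
rewrite (fine_gt0_EFin _ Z_gt0).
case: (gauss 1 L) => [j| |] Zge Zle j0 //.
  move: Zle j0; rewrite -!EFinM !lee_fin => Zle j0.
  exists ((Num.sqrt c)^-1 ^+ #|` L| * j) => //.
  rewrite mulr_gt0 ?r_gt0 // lt_neqAle j0 andbT; apply: contraTneq Z_gt0 => j_eq0.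
  by rewrite -leNgt (le_trans Zle) // -j_eq0 !mulr0.
by move: Zge; rewrite muleA -EFinM gt0_muley ?lte_fin ?mulr_gt0 ?r_gt0.
Qed.
End GaussianReference.

Lemma le_of_quadratic_sandwich {R : realFieldType} (a c b : R) :
  (forall s, a * s ^+ 2 - b <= c * s ^+ 2) -> a <= c.
Proof.
move=> sandwich; rewrite leNgt; apply/negP => ca; rewrite -subr_gt0 in ca.
pose t := `|b| / (a - c) + 1.
have t_ge1 : 1 <= t by rewrite /t lerDr divr_ge0 // ltW.
have ct : (a - c) * t = `|b| + (a - c) by rewrite /t; field; rewrite gt_eqF.
have t_sq : (a - c) * t <= (a - c) * t ^+ 2.
  by rewrite ler_pM2l // expr2 ler_peMl // (le_trans ler01 t_ge1).
have := sandwich t; have := ler_norm b; nra.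
Qed.

Lemma lne_ratio_le {R : realType} {N Z : \bar R} {k1 k2 g1 g2 : R} :
  0 < k1 -> 0 < k2 -> 0 < g1 -> 0 < g2 -> (0 <= N)%E -> 0 < fine Z ->
  (N <= (k1 * g1)%:E)%E -> ((k2 * g2)%:E <= Z)%E ->
  (lne ((fine Z)^-1%:E * N) <= (ln k1 - ln k2 + (ln g1 - ln g2))%:E)%E.
Proof.
move=> k1_gt0 k2_gt0 g1_gt0 g2_gt0 N0 Z_gt0 Nle Zge; set z := fine Z.
have zV_gt0 : 0 < z^-1 by rewrite invr_gt0.
have ratio_le : ((fine Z)^-1%:E * N <= (z^-1 * (k1 * g1))%:E)%E.
  by rewrite EFinM lee_wpmul2l // lee_fin ltW.
apply: (@le_trans _ _ (ln (z^-1 * (k1 * g1)))%:E).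
  rewrite -lne_EFin ?mulr_gt0 // lee_lne // in_itv /= leey andbT.
    by rewrite mule_ge0 // lee_fin ltW.
  by rewrite lee_fin !mulr_ge0 // ltW.
have ln_z : ln k2 + ln g2 <= ln z.
  by rewrite -lnM ?posrE // ler_ln ?posrE ?mulr_gt0 // -lee_fin -(fine_gt0_EFin _ Z_gt0).
rewrite lee_fin !lnM ?posrE ?mulr_gt0 // lnV ?posrE //.
by move: ln_z; lra.
Qed.

Section ModelB.
Context {R : realType} {d : nat} (u : 'rV[R]_d) {A C2 : R}.
Context {V : site d -> site d -> R -> R} {B : site d -> site d -> R}.
Hypothesis V_bounds : forall x y, nn x y -> forall s : R,
  A * s ^+ 2 - B x y <= V x y s <= C2 * s ^+ 2.
Variable L : {fset site d}.

Local Notation psi := (psiu u).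
Local Notation tilt_weight := (bond_weight L (fun x y => dotZ (x - y) u ^+ 2)).
Local Notation fluct phi := (fun y => phi y - psi y).

Lemma B_ge0 (x y : site d) : nn x y -> 0 <= B x y.
Proof.
move=> nxy; have /andP[] := V_bounds _ _ nxy 0.
by rewrite expr0n /= !mulr0; lra.
Qed.

Lemma A_le_C2 (x y : site d) : nn x y -> A <= C2.
Proof.
move=> nxy; apply: (@le_of_quadratic_sandwich _ _ _ (B x y)) => s.
by case/andP: (V_bounds _ _ nxy s) => /le_trans; apply.
Qed.

Lemma Ham_ge phi :
  A * (dirichlet L (fluct phi) + tilt_weight) - bond_weight L B <= Ham V L psi phi.
Proof.
rewrite -Ham_sq_psiu -(Ham_cst B L psi phi) -HamZ -HamB.
by apply: ler_Ham => x y nxy s; case/andP: (V_bounds _ _ nxy s).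
Qed.

Lemma Ham_le phi : Ham V L psi phi <= C2 * (dirichlet L (fluct phi) + tilt_weight).
Proof.
rewrite -Ham_sq_psiu -HamZ.
by apply: ler_Ham => x y nxy s; case/andP: (V_bounds _ _ nxy s).
Qed.

Lemma Zpart_ge : ((expR (- (C2 * tilt_weight)))%:E * gauss C2 L <= Zpart V L psi)%E.
Proof.
rewrite -(gauss_shift _ _ psi) -iintZl ?expR_ge0 //.
apply: le_iint => [p|p _]; first by rewrite -EFinM lee_fin mulr_ge0 ?expR_ge0.
by rewrite -EFinM lee_fin -expRD ler_expR; move: (Ham_le p); lra.
Qed.

Lemma Zpart_le :
  (Zpart V L psi <= (expR (bond_weight L B - A * tilt_weight))%:E * gauss A L)%E.
Proof.
rewrite -(gauss_shift _ _ psi) -iintZl ?expR_ge0 //.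
apply: le_iint => [p|p _]; first by rewrite lee_fin expR_ge0.
by rewrite -EFinM lee_fin -expRD ler_expR; move: (Ham_ge p); lra.
Qed.

Lemma tilted_weight_le (beta : R) :
  (iint (enum_fset L) (fun phi => (expR (- Ham V L psi phi) *
     expR (beta / 2 * \sum_(x <- clos L) \sum_(y <- clos L | nn x y)
             (phi x - phi y - dotZ (x - y) u) ^+ 2))%:E) psi <=
   (expR (bond_weight L B - A * tilt_weight))%:E * gauss (A - beta) L)%E.
Proof.
rewrite -(gauss_shift _ _ psi) -iintZl ?expR_ge0 //.
apply: le_iint => [p|p p_off]; first by rewrite lee_fin mulr_ge0 ?expR_ge0.
rewrite -EFinM lee_fin sum_clos_tilted_sq // -!expRD ler_expR.
by move: (Ham_ge p); lra.
Qed.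
End ModelB.

Theorem lemma4p1 (R : realType) (d : nat) (u : 'rV[R]_d) (A C2 : R)
  (Omega : Type)
  (V : Omega -> site d -> site d -> R -> R) (B : Omega -> site d -> site d -> R) :
  0 < A -> 0 < C2 ->
  (forall w x y, V w x y = V w y x) ->
  (forall w x y, B w x y = B w y x) ->
  (forall w x y, nn x y -> isC2 (V w x y) /\ is_even (V w x y)) ->
  exists beta0 : R, 0 < beta0 /\
  forall beta : R, 0 < beta < beta0 ->
  forall (L : {fset site d}) (w : Omega),
  (forall x y, nn x y -> forall s : R,
      A * s ^+ 2 - B w x y <= V w x y s <= C2 * s ^+ 2) ->
  (Ffree beta u L (V w) <=
   (- (#|` L|%:R) * (sigmaL (A - beta) L - sigmaL C2 L)
    + \sum_(x <- clos L) \sum_(y <- clos L | nn x y) B w x y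
    - (A - beta - C2) / 2 *
        \sum_(x <- clos L) \sum_(y <- clos L | nn x y) (dotZ (x - y) u) ^+ 2)%:E)%E.
Proof.
move=> A_gt0 C2_gt0 _ _ _; exists A; split => // beta /andP[beta_gt0 beta_lt] L w bounds.
have Ab_gt0 : 0 < A - beta by rewrite subr_gt0.
set Z := Zpart (V w) L (psiu u).
have Zge := Zpart_ge u bounds L; have Zle := Zpart_le u bounds L.
rewrite /Ffree /gibbs /intL -/Z.
(* A vanishing or infinite partition function makes [fine Z = 0], the Gibbs weight [0]
   and [Ffree = -oo]. *)
have [Z0|Zn0] := eqVneq (fine Z) 0.
  under eq_fun do rewrite Z0 invr0 mulr0 mul0r.
  by rewrite iint0 le0_lneNy ?leNye.
have Z_gt0 : 0 < fine Z.
  by rewrite lt_neqAle eq_sym Zn0 fine_ge0 // iint_ge0 // => p; rewrite lee_fin expR_ge0.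
have [gA gA_gt0 gAE] := gauss_fin_gt0 C2_gt0 A_gt0 (expR_gt0 _) Zge Zle Z_gt0 _ Ab_gt0.
have [gC gC_gt0 gCE] := gauss_fin_gt0 C2_gt0 A_gt0 (expR_gt0 _) Zge Zle Z_gt0 _ C2_gt0.
have N_le := tilted_weight_le u bounds L beta; rewrite gAE -EFinM in N_le.
rewrite gCE -EFinM in Zge.
under eq_fun do rewrite mulrAC mulrC EFinM.
rewrite iintZl ?invr_ge0 ?(ltW Z_gt0) //.
apply: le_trans (lne_ratio_le (expR_gt0 _) (expR_gt0 _) gA_gt0 gC_gt0 _ Z_gt0 N_le Zge) _.
  by apply: iint_ge0 => p; rewrite lee_fin mulr_ge0 ?expR_ge0.
rewrite lee_fin !expRK mulNr mulrBr !mulr_sigmaL gAE gCE /=.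
have := bond_weight_le_clos L _ (B_ge0 bounds).
have := bond_weight_tilt_le u L (ltW beta_gt0) (A_le_C2 bounds).
lra.
Qed.
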